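(* Let $0<\alpha<n$, $0<t\le s<\infty$ and $0<q_j\le p_j<\infty$ for $j=1,2$. Suppose that $\frac1s=\frac1{p_1}+\frac1{p_2}-\frac\alpha n$ and $\frac ts>\max\left(\frac{q_1}{p_1},\frac{q_2}{p_2}\right)$. Then there exists no constant $C>0$ such that $$\|B_\alpha(f,g)\|_{\mathcal{M}^s_t}\le C\,\|f\|_{\mathcal{M}^{p_1}_{q_1}}\|g\|_{\mathcal{M}^{p_2}_{q_2}}$$ holds for all (nonnegative measurable) $f,g$ with $\|f\|_{\mathcal{M}^{p_1}_{q_1}}\|g\|_{\mathcal{M}^{p_2}_{q_2}}<\infty$.
   Context: For $0<\alpha<n$ the bilinear fractional integral operator is $B_\alpha(f,g)(x)=\int_{\mathbb{R}^n}\frac{f(x-y)g(x+y)}{|y|^{n-\alpha}}\,dy$. $\mathscr{D}$ denotes the set of dyadic cubes $2^k(m+[0,1)^n)$, $k\in\mathbb{Z}$, $m\in\mathbb{Z}^n$, and $\fint_Q h=\frac1{|Q|}\int_Q h$. For $0<q\le p<\infty$ the Morrey (quasi-)norm is $\|f\|_{\mathcal{M}^p_q}=\sup_{Q\in\mathscr{D}}|Q|^{1/p}\left(\fint_Q|f(x)|^q\,dx\right)^{1/q}$. *)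

From HB Require Import structures.
From mathcomp Require Import all_boot all_order all_algebra.
From mathcomp Require Import all_classical all_reals all_analysis.
Set Implicit Arguments. Unset Strict Implicit. Unset Printing Implicit Defensive.
Import Order.TTheory GRing.Theory Num.Theory.
Import numFieldNormedType.Exports.
Local Open Scope classical_set_scope.
Local Open Scope ring_scope.

(* Points of R^n are n-tuples of reals; R^n carries the product (= Borel)
   sigma-algebra of mathcomp-analysis ([measure_tuple_display]). *)

Section Defs.
Variable R : realType.

(* Lebesgue integral over R^n of a nonnegative function, written out as the
   iterated one-dimensional Lebesgue integral (Tonelli):
   int_Rn n F = \int_R ... \int_R F(x_1,...,x_n) dx_n ... dx_1. *)
Fixpoint int_Rn (n : nat) : (n.-tuple R -> \bar R) -> \bar R :=
  match n return (n.-tuple R -> \bar R) -> \bar R with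
  | 0 => fun F => F [tuple]
  | n'.+1 => fun F =>
      (\int[@lebesgue_measure R]_(x in [set: R])
          int_Rn (fun y : n'.-tuple R => F (cons_tuple x y)))%E
  end.

Definition tadd n (x y : n.-tuple R) : n.-tuple R := [tuple tnth x i + tnth y i | i < n].
Definition tsub n (x y : n.-tuple R) : n.-tuple R := [tuple tnth x i - tnth y i | i < n].

Definition enorm n (y : n.-tuple R) : R := Num.sqrt (\sum_(i < n) tnth y i ^+ 2).

Definition B_alpha n (alpha : R) (f g : n.-tuple R -> R) (x : n.-tuple R) : \bar R :=
  int_Rn (fun y => (f (tsub x y) * g (tadd x y) / powR (enorm y) (n%:R - alpha))%:E).

Definition dyadic_cube n (k : int) (m : 'I_n -> int) : set (n.-tuple R) :=
  [set x | forall i : 'I_n,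
      (2%:R ^ k * (m i)%:~R <= tnth x i) /\ (tnth x i < 2%:R ^ k * ((m i)%:~R + 1))].

Definition dyadic_vol n (k : int) : R := (2%:R ^ k) ^+ n.

Definition morrey_norm n (p q : R) (h : n.-tuple R -> \bar R) : \bar R :=
  ereal_sup [set v | exists (k : int) (m : 'I_n -> int),
    v = ((powR (dyadic_vol n k) p^-1)%:E *
          poweR ((dyadic_vol n k)^-1%:E *
                 int_Rn (fun x => ((\1_(dyadic_cube k m) x : R)%:E *
                                   poweR `|h x|%E q)%E))%E q^-1)%E ].

End Defs.

From HB Require Import structures.
From mathcomp Require Import all_boot all_order all_algebra.
From mathcomp Require Import all_classical all_reals all_analysis measurable_realfun.
From mathcomp Require Import lra ring.
Import Order.TTheory GRing.Theory Num.Theory.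
Local Open Scope classical_set_scope.
Local Open Scope ring_scope.

(** Test both functions with [f = g], the indicator of [N^n] cubes of side
    [r] placed at the points of the grid [(1/N) Z^n] in [[0,1)^n], with
    [r N <= 1].  In each coordinate a dyadic interval of length [l] meets
    [f] in measure at most [min (l, r N, r N l + 2 r)], so
    [||f||_{M^p_q} <= (3^{1/q} r^{1/p})^n] as soon as [r N <= r^{q/p}].
    On the other hand [B_alpha(f,f) >= c r^alpha] on a subset of [[0,1)^n]
    of measure [(N r / 2)^n], so [||B_alpha(f,f)||_{M^s_t} >= c r^alpha (N r)^{n/t}].
    Taking [r = N^{-1/(1-theta)}] with [theta = max(q1/p1, q2/p2)], so that
    [N r = r^theta], the quotient of the two sides of the inequality is
    [c' r^{n theta/t - n/s}], which is unbounded as [N -> oo] because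
    [theta < t/s]. *)

Section iterated_integral.
Context {R : realType}.
Notation lam := (@lebesgue_measure R).
Local Open Scope ereal_scope.

(* No measurability assumption: the inner integrals of [int_Rn] are not known
   to be measurable in the outer variables. *)
Lemma le_ge0_integralT (f g : R -> \bar R) : (forall x, 0 <= f x) ->
  (forall x, f x <= g x) -> \int[lam]_x f x <= \int[lam]_x g x.
Proof.
move=> f0 fg; have g0 x : 0 <= g x by apply: le_trans (fg x).
rewrite !ge0_integralTE //; apply: ereal_sup_le => _ [h hf <-].
by exists h => //= x; exact: le_trans (hf x) (fg x).
Qed.

Lemma int_Rn_ge0 n (F : n.-tuple R -> \bar R) : (forall x, 0 <= F x) -> 0 <= int_Rn F.
Proof.
elim: n F => [|n IH] F F0 /=; first exact: F0.
by apply: integral_ge0 => x _; exact: IH.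
Qed.

Lemma le_int_Rn n (F G : n.-tuple R -> \bar R) : (forall x, 0 <= F x) ->
  (forall x, F x <= G x) -> int_Rn F <= int_Rn G.
Proof.
elim: n F G => [|n IH] F G F0 FG /=; first exact: FG.
by apply: le_ge0_integralT => x; [exact: int_Rn_ge0 | exact: IH].
Qed.

Lemma int_Rn_prod n (a : R) (h : 'I_n -> R -> R) (c : 'I_n -> R) : (0 <= a)%R ->
  (forall i x, 0 <= h i x)%R -> (forall i, measurable_fun setT (h i)) ->
  (forall i, \int[lam]_x (h i x)%:E = (c i)%:E) ->
  int_Rn (fun x : n.-tuple R => (a * \prod_(i < n) h i (tnth x i))%:E) =
  (a * \prod_(i < n) c i)%:E.
Proof.
elim: n a h c => [|n IH] a h c a0 h0 mh hc /=; first by rewrite !big_ord0.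
have c0 i : (0 <= c i)%R.
  by rewrite -lee_fin -hc; apply: integral_ge0 => x _; rewrite lee_fin.
set P := (\prod_(i < n) c (lift ord0 i))%R.
have P0 : (0 <= P)%R by apply: prodr_ge0 => i _.
have inner x : int_Rn (fun y : n.-tuple R =>
    (a * \prod_(i < n.+1) h i (tnth (cons_tuple x y) i))%:E) = (a * P * h ord0 x)%:E.
  under eq_fun => y.
    rewrite big_ord_recl tnth0 mulrA.
    under eq_bigr => i _ do rewrite tnthS.
  over.
  by rewrite (IH _ (fun i => h (lift ord0 i)) (fun i => c (lift ord0 i))) ?mulr_ge0 // mulrAC.
under eq_integral => x _ do rewrite inner EFinM.
rewrite ge0_integralZl_EFin ?mulr_ge0 //; last 2 first.
- by move=> x _; rewrite lee_fin.
- by apply/measurable_EFinP; exact: mh.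
by rewrite [X in _ * X](hc ord0) -EFinM big_ord_recl mulrA (mulrAC a).
Qed.

End iterated_integral.

Definition chi {R : realType} (a b : R) : R -> R := \1_(`[a, b[%classic).

Definition comb {R : realType} (N : nat) (c d : R) (x : R) : R :=
  \sum_(j < N) chi (j%:R / N%:R + c) (j%:R / N%:R + d) x.

Section comb.
Context {R : realType}.
Notation lam := (@lebesgue_measure R).
Implicit Types (a b c d r u v x : R) (N : nat).

Lemma chiE a b x : chi a b x = ((a <= x) && (x < b))%:R.
Proof. by rewrite /chi indicE mem_setE in_itv. Qed.

Lemma chi_ge0 a b x : 0 <= chi a b x.
Proof. by rewrite chiE ler0n. Qed.

Lemma chi_le1 a b x : chi a b x <= 1.
Proof. by rewrite chiE lern1 leq_b1. Qed.

Lemma measurable_chi a b : measurable_fun setT (chi a b).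
Proof. by apply/measurable_indicP; exact: measurable_itv. Qed.

Lemma integral_chi a b : a <= b -> (\int[lam]_x (chi a b x)%:E = (b - a)%:E)%E.
Proof.
move=> ab; have mI : measurable (`[a, b[%classic : set R) by exact: measurable_itv.
rewrite integral_indic // setIT.
have := @lebesgue_measure_itv R `[a, b[; rewrite /= lte_fin => ->.
by case: ltgtP ab => // -> _; rewrite subrr.
Qed.

Lemma comb_ge0 N c d x : 0 <= comb N c d x.
Proof. by apply: sumr_ge0 => j _; exact: chi_ge0. Qed.

Lemma measurable_comb N c d : measurable_fun setT (comb N c d).
Proof. by apply: measurable_sum => j; exact: measurable_chi. Qed.

Lemma chi_le_comb N c d x (j : 'I_N) :
  chi (j%:R / N%:R + c) (j%:R / N%:R + d) x <= comb N c d x.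
Proof.
by rewrite /comb (bigD1 j) //= lerDl; apply: sumr_ge0 => i _; exact: chi_ge0.
Qed.

Lemma comb_neq0 {N c d x} : comb N c d x != 0 ->
  exists j : 'I_N, j%:R / N%:R + c <= x < j%:R / N%:R + d.
Proof.
move=> cx; apply: contra_notP (negP cx) => nx; apply/eqP.
rewrite /comb big1 // => j _; rewrite chiE.
by case: (boolP (_ && _)) => // hj; case: nx; exists j.
Qed.

Lemma comb_teeth_disjoint {N c d x} {i j : 'I_N} : d - c <= N%:R^-1 ->
  i%:R / N%:R + c <= x < i%:R / N%:R + d ->
  j%:R / N%:R + c <= x < j%:R / N%:R + d -> i = j.
Proof.
move=> dc; have N0 : 0 < N%:R :> R by rewrite ltr0n (leq_ltn_trans _ (ltn_ord i)).
have le_ij (k l : 'I_N) : k%:R / N%:R + c <= x < k%:R / N%:R + d ->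
    l%:R / N%:R + c <= x < l%:R / N%:R + d -> (l <= k)%N.
  move=> /andP[h1 h2] /andP[h3 h4].
  have : l%:R / N%:R < (k%:R + 1) / N%:R :> R by rewrite mulrDl mul1r; lra.
  by rewrite ltr_pM2r ?invr_gt0 // natr1 ltr_nat ltnS.
by move=> hi hj; apply/val_inj/eqP; rewrite eqn_leq !le_ij.
Qed.

Lemma comb_eq01 {N c d} x : d - c <= N%:R^-1 -> comb N c d x = 0 \/ comb N c d x = 1.
Proof.
move=> dc; have [|/comb_neq0 [j hj]] := eqVneq (comb N c d x) 0; [by left | right].
rewrite /comb (bigD1 j) //= big1 => [|i ij]; first by rewrite chiE hj addr0.
rewrite chiE; case: (boolP (_ && _)) => // hi.
by move: ij; rewrite (comb_teeth_disjoint dc hi hj) eqxx.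
Qed.

Lemma comb_le1 N c d x : d - c <= N%:R^-1 -> comb N c d x <= 1.
Proof. by move=> /(comb_eq01 x) [|] ->. Qed.

Lemma integral_comb N c d : c <= d ->
  (\int[lam]_x (comb N c d x)%:E = (N%:R * (d - c))%:E)%E.
Proof.
move=> cd; under eq_integral => x _ do rewrite -sumEFin.
rewrite ge0_integral_sum //; last 2 first.
- by move=> j; apply/measurable_EFinP; exact: measurable_chi.
- by move=> j x _; rewrite lee_fin chi_ge0.
under eq_bigr => j _ do rewrite integral_chi ?lerD2l // opprD addrACA subrr add0r.
by rewrite sumEFin sumr_const card_ord mulr_natl.
Qed.

Lemma sum_nat_itv_le u v N : u <= v ->
  \sum_(j < N) ((u < j%:R) && (j%:R < v))%:R <= v - u + 1.
Proof.
(* The second conjunct is the invariant: once some [j] has been counted, the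
   count up to [k] is at most [k - u]. *)
move=> uv; pose S k : R := \sum_(j < k) ((u < j%:R) && (j%:R < v))%:R.
suff /(_ N) [] : forall k, S k <= v - u + 1 /\ (S k = 0 \/ S k <= k%:R - u) by [].
elim => [|k [IH1 IH2]]; first by rewrite /S big_ord0; split; [lra | left].
rewrite /S big_ord_recr /= -/(S k) -natr1.
case: (boolP ((u < k%:R) && (k%:R < v))) => [/andP[uk kv]|_]; last first.
  by rewrite addr0; split => //; case: IH2 => ?; [left | right; lra].
have Sk : S k <= k%:R - u by case: IH2 => // ->; lra.
by rewrite (_ : true%:R = 1) //; split; [lra | right; lra].
Qed.

Local Open Scope ereal_scope.

Lemma integral_chi_comb_le_count {N r} a b : (0 < N)%N -> (0 < r)%R ->
  \int[lam]_x (chi a b x * comb N 0 r x)%:E <=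
  (r * \sum_(j < N) ((N%:R * (a - r) < j%:R) && (j%:R < N%:R * b))%:R)%:E.
Proof.
move=> N0 r0; have Np : (0 < N%:R :> R)%R by rewrite ltr0n.
(* Tooth [j] meets [[a, b)] only if [N (a - r) < j < N b]. *)
set hit := fun j : 'I_N => ((N%:R * (a - r) < j%:R) && (j%:R < N%:R * b))%R.
apply: (@le_trans _ _ (\int[lam]_x
    (\sum_(j < N) (hit j)%:R * chi (j%:R / N%:R + 0) (j%:R / N%:R + r) x)%:E)).
  apply: le_ge0_integralT => x; first by rewrite lee_fin mulr_ge0 ?chi_ge0 ?comb_ge0.
  rewrite lee_fin /comb mulr_sumr; apply: ler_sum => j _.
  case: (boolP (hit j)) => hj; first by rewrite mul1r ler_piMl ?chi_ge0 ?chi_le1.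
  rewrite mul0r !chiE addr0; case: (boolP (_ && _)); rewrite ?mul0r // => /andP[h1 h2].
  case: (boolP (_ && _)); rewrite ?mulr0 // => /andP[h3 h4].
  move/negP: hj; case; apply/andP; split.
    by rewrite mulrC -ltr_pdivlMr //; lra.
  by rewrite mulrC -ltr_pdivrMr //; lra.
under eq_integral => x _ do rewrite -sumEFin.
rewrite ge0_integral_sum //; last 2 first.
- move=> j; apply/measurable_EFinP.
  by apply: measurable_funM; [exact: measurable_cst | exact: measurable_chi].
- by move=> j x _; rewrite lee_fin mulr_ge0 ?chi_ge0.
have tooth j : \int[lam]_x ((hit j)%:R * chi (j%:R / N%:R + 0) (j%:R / N%:R + r) x)%:E
    = ((hit j)%:R * r)%:E.
  under eq_integral => x _ do rewrite EFinM.
  rewrite ge0_integralZl_EFin ?ler0n //; last 2 first.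
  - by move=> x _; rewrite lee_fin chi_ge0.
  - by apply/measurable_EFinP; exact: measurable_chi.
  by rewrite integral_chi ?lerD2l ?ltW // -EFinM opprD addrACA subrr add0r subr0.
under eq_bigr => j _ do rewrite tooth.
by rewrite sumEFin lee_fin mulr_sumr; apply: ler_sum => j _; rewrite mulrC.
Qed.

Lemma integral_chi_comb_bounds {N r a b} : (0 < N)%N -> (0 < r)%R ->
  (r * N%:R <= 1)%R -> (a <= b)%R ->
  exists2 w, \int[lam]_x (chi a b x * comb N 0 r x)%:E = w%:E &
    [/\ 0 <= w, w <= b - a, w <= r * N%:R & w <= r * N%:R * (b - a) + 2 * r]%R.
Proof.
move=> N0 r0 rN ab; have Np : (0 < N%:R :> R)%R by rewrite ltr0n.
set I := \int[lam]_x _.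
have I0 : 0 <= I by apply: integral_ge0 => x _; rewrite lee_fin mulr_ge0 ?chi_ge0 ?comb_ge0.
have Ilen : I <= (b - a)%:E.
  rewrite -integral_chi //; apply: le_ge0_integralT => x.
    by rewrite lee_fin mulr_ge0 ?chi_ge0 ?comb_ge0.
  rewrite lee_fin ler_piMr ?chi_ge0 // comb_le1 // subr0.
  by rewrite -(ler_pM2r Np) mulVf ?gt_eqF.
have Icount : I <= _ := integral_chi_comb_le_count a b N0 r0.
have Ifin : I \is a fin_num by rewrite ge0_fin_numE // (le_lt_trans Ilen) ?ltry.
have [w Iw] : exists w, I = w%:E by exists (fine I); rewrite fineK.
exists w => //; move: I0 Ilen Icount; rewrite Iw !lee_fin => I0 Ilen Icount.
set cnt := (\sum_(j < N) _)%R in Icount.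
have cntN : (cnt <= N%:R)%R.
  apply: (@le_trans _ _ (\sum_(j < N) 1)%R); last by rewrite sumr_const card_ord.
  by apply: ler_sum => j _; rewrite lern1 leq_b1.
have cntL : (cnt <= N%:R * b - N%:R * (a - r) + 1)%R.
  by apply: sum_nat_itv_le; rewrite ler_pM2l //; lra.
have rcntN : (r * cnt <= r * N%:R)%R by rewrite ler_pM2l.
have rcntL : (r * cnt <= r * (N%:R * b - N%:R * (a - r) + 1))%R by rewrite ler_pM2l.
have rrN : (r * (r * N%:R) <= r)%R by rewrite ler_piMr // ltW.
split; [by [] | by [] | lra | lra].
Qed.

End comb.

Section dyadic_factor.
Context {R : realType}.

Lemma dyadic_factor_le (l w r M P Q : R) : 0 < l -> 0 < r -> 0 < M <= 1 ->
  0 < P <= Q -> M <= r `^ (P / Q) ->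
  0 <= w -> w <= l -> w <= M -> w <= M * l + 2 * r ->
  l `^ P * (w / l) `^ Q <= 3 `^ Q * r `^ P.
Proof.
move=> l0 r0 /andP[M0 M1] /andP[P0 PQ] Mr w0 wl wM wMl.
have Q0 : 0 < Q by apply: lt_le_trans PQ.
have [->|wn0] := eqVneq w 0.
  by rewrite mul0r powR0 ?gt_eqF // mulr0 mulr_ge0 // powR_ge0.
have wp : 0 < w by rewrite lt_def wn0.
have lnMr : ln M <= P / Q * ln r by rewrite -ln_powR ler_ln ?posrE ?powR_gt0.
rewrite -ler_ln ?posrE ?mulr_gt0 ?powR_gt0 ?divr_gt0 //.
rewrite !lnM ?posrE ?powR_gt0 ?divr_gt0 // !ln_powR ln_div ?posrE //.
have ln3 : 0 <= ln (3 : R) by rewrite ln_ge0 // ler1n.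
have QPQ : Q * (P / Q * ln r) = P * ln r by rewrite mulrA mulrCA divff ?gt_eqF ?mulr1.
have Q3 : 0 <= Q * ln 3 by rewrite mulr_ge0 // ltW.
(* Regimes: [l <= r]; [M l <= r < l], where [w <= 3 r]; [r < M l] and [l <= 1],
   where [w <= 3 M l]; [1 < l], where [w <= M]. *)
have [lr|rl] := lerP l r.
  have k1 : 0 <= Q * (ln l - ln w) by rewrite mulr_ge0 ?subr_ge0 ?ler_ln ?posrE // ltW.
  have k2 : 0 <= P * (ln r - ln l) by rewrite mulr_ge0 ?subr_ge0 ?ler_ln ?posrE // ltW.
  lra.
have [Mlr|rMl] := lerP (M * l) r.
  have h1 : ln w <= ln 3 + ln r.
    by rewrite -lnM ?posrE // ler_ln ?posrE ?mulr_gt0 //; lra.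
  have k1 : 0 <= Q * (ln 3 + ln r - ln w) by rewrite mulr_ge0 ?subr_ge0 // ltW.
  have k2 : 0 <= (Q - P) * (ln l - ln r) by rewrite mulr_ge0 ?subr_ge0 ?ler_ln ?posrE // ltW.
  lra.
have k3 : 0 <= Q * (P / Q * ln r - ln M) by rewrite mulr_ge0 ?subr_ge0 // ltW.
have [l1|l1] := lerP l 1.
  have h1 : ln w <= ln 3 + ln M + ln l.
    by rewrite -!lnM ?posrE ?mulr_gt0 // ler_ln ?posrE ?mulr_gt0 //; nra.
  have k1 : 0 <= Q * (ln 3 + ln M + ln l - ln w) by rewrite mulr_ge0 ?subr_ge0 // ltW.
  have k2 : 0 <= P * - ln l by rewrite mulr_ge0 ?oppr_ge0 ?ln_le0 // ltW.
  lra.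
have k1 : 0 <= Q * (ln M - ln w) by rewrite mulr_ge0 ?subr_ge0 ?ler_ln ?posrE // ltW.
have k2 : 0 <= (Q - P) * ln l by rewrite mulr_ge0 ?subr_ge0 ?ln_ge0 // ltW.
lra.
Qed.

End dyadic_factor.

Definition test_fun {R : realType} n N (r : R) (x : n.-tuple R) : R :=
  \prod_(i < n) comb N 0 r (tnth x i).

Section morrey_test_fun.
Context {R : realType}.
Implicit Types (p q r : R) (N n : nat).

Lemma measurable_test_fun n N r : measurable_fun setT (@test_fun R n N r).
Proof.
apply: measurable_prod => i _.
by apply: measurableT_comp; [exact: measurable_comb | exact: measurable_tnth].
Qed.

Lemma test_fun_ge0 n N r x : 0 <= @test_fun R n N r x.
Proof. by apply: prodr_ge0 => i _; exact: comb_ge0. Qed.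

Lemma powR_test_fun n N r q x : 0 < q -> r <= N%:R^-1 ->
  @test_fun R n N r x `^ q = test_fun n N r x.
Proof.
move=> q0 rN; suff [->|->] : test_fun n N r x = 0 \/ test_fun n N r x = 1.
- by rewrite powR0 ?gt_eqF.
- by rewrite powR1.
apply: (big_ind (fun y => y = 0 \/ y = 1)); first by right.
  by move=> u v [->|->] [->|->]; rewrite ?mul0r ?mulr0 ?mulr1; [left|left|left|right].
by move=> i _; apply: comb_eq01; rewrite subr0.
Qed.

Lemma indic_dyadic_cube n (k : int) (m : 'I_n -> int) (x : n.-tuple R) :
  \1_(dyadic_cube k m) x =
  \prod_(i < n) chi (2%:R ^ k * (m i)%:~R) (2%:R ^ k * ((m i)%:~R + 1)) (tnth x i).
Proof.
rewrite indicE; have [Qx|Qx] := pselect (dyadic_cube k m x).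
  by rewrite mem_set // big1 // => i _; rewrite chiE; have [-> ->] := Qx i.
rewrite memNset //; have /existsNP [i Ni] := Qx.
by rewrite (bigD1 i) //= chiE (_ : _ && _ = false) ?mul0r //; apply/negbTE/negP => /andP.
Qed.

Lemma powR_prod n (F : 'I_n -> R) a : (forall i, 0 <= F i) ->
  (\prod_(i < n) F i) `^ a = \prod_(i < n) F i `^ a.
Proof.
elim: n F => [|n IH] F F0; first by rewrite !big_ord0 powR1.
by rewrite !big_ord_recl powRM ?IH // prodr_ge0.
Qed.

Lemma morrey_norm_ge0 {n} p q (h : n.-tuple R -> \bar R) : (0 <= morrey_norm p q h)%E.
Proof.
apply: le_ereal_sup_tmp; eexists; first by exists 0, (fun=> 0).
by rewrite mule_ge0 // ?lee_fin ?powR_ge0 // poweR_ge0.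
Qed.

Lemma int_Rn_dyadic_cube_test_fun {n N r q} (k : int) (m : 'I_n -> int) :
  (0 < N)%N -> 0 < r -> r * N%:R <= 1 -> 0 < q ->
  exists2 w : 'I_n -> R,
    int_Rn (fun x => ((\1_(dyadic_cube k m) x : R)%:E *
                      `|(test_fun n N r x)%:E| `^ q)%E) = (\prod_(i < n) w i)%:E &
    forall i, [/\ 0 <= w i, w i <= 2%:R ^ k, w i <= r * N%:R &
                  w i <= r * N%:R * 2%:R ^ k + 2 * r].
Proof.
move=> N0 r0 rN1 q0.
have Np : 0 < N%:R :> R by rewrite ltr0n.
have rN : r <= N%:R^-1 by rewrite -(ler_pM2r Np) mulVf ?gt_eqF.
set l : R := 2%:R ^ k; have l0 : 0 < l by exact: exprz_gt0.
pose a i := l * (m i)%:~R; pose b i := l * ((m i)%:~R + 1).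
have abl i : b i - a i = l by rewrite /a /b; ring.
have ab i : a i <= b i by rewrite -subr_ge0 abl ltW.
have /choice [w Hw] : forall i, exists w,
    (\int[lebesgue_measure]_x (chi (a i) (b i) x * comb N 0 r x)%:E = w%:E)%E /\
    [/\ 0 <= w, w <= l, w <= r * N%:R & w <= r * N%:R * l + 2 * r].
  move=> i; have [w ? ?] := integral_chi_comb_bounds N0 r0 rN1 (ab i).
  by exists w; rewrite -(abl i).
exists w => [|i]; last by case: (Hw i).
under eq_fun => x.
  rewrite abse_EFin ger0_norm ?test_fun_ge0 // poweR_EFin powR_test_fun //.
  rewrite -EFinM indic_dyadic_cube -big_split -[X in X%:E]mul1r.
over.
rewrite (@int_Rn_prod R n 1 (fun i y => chi (a i) (b i) y * comb N 0 r y) w) ?mul1r //.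
- by move=> i y; rewrite mulr_ge0 ?chi_ge0 ?comb_ge0.
- by move=> i; apply: measurable_funM; [exact: measurable_chi | exact: measurable_comb].
- by move=> i; case: (Hw i).
Qed.

Lemma morrey_norm_test_fun_le n {N r p q} : (0 < N)%N -> 0 < r -> r * N%:R <= 1 ->
  0 < q -> q <= p -> r * N%:R <= r `^ (q / p) ->
  (morrey_norm p q (fun x => (@test_fun R n N r x)%:E) <=
   ((3 `^ q^-1 * r `^ p^-1) ^+ n)%:E)%E.
Proof.
move=> N0 r0 rN1 q0 qp rNq; apply: ge_ereal_sup => _ [k [m ->]].
have [w -> Hw] := int_Rn_dyadic_cube_test_fun k m N0 r0 rN1 q0.
set l : R := 2%:R ^ k; have l0 : 0 < l by exact: exprz_gt0.
have w0 i : 0 <= w i by case: (Hw i).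
rewrite /dyadic_vol -/l -[(_^-1%:E * _)%E]EFinM poweR_EFin -EFinM lee_fin.
have -> : (l ^+ n)^-1 * \prod_(i < n) w i = \prod_(i < n) (w i / l).
  by rewrite big_split /= prodr_const card_ord exprVn mulrC.
have cst (c : R) : c ^+ n = \prod_(i < n) c by rewrite prodr_const card_ord.
rewrite [l ^+ n]cst powR_prod => [|i]; last exact: ltW.
rewrite powR_prod => [|i]; last by rewrite divr_ge0 ?w0 ?ltW.
rewrite cst -big_split; apply: ler_prod => i _; rewrite mulr_ge0 ?powR_ge0 //=.
have [_ wl wrN wrNl] := Hw i.
apply: (@dyadic_factor_le _ _ _ _ (r * N%:R)) => //.
- by rewrite mulr_gt0 ?ltr0n.
- by rewrite invr_gt0 (lt_le_trans q0) ?lef_pV2 ?posrE // (lt_le_trans q0).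
- by rewrite invrK [p^-1 * q]mulrC.
Qed.

Lemma prodr_ge1 n (F : 'I_n -> R) : (forall i, 1 <= F i) -> 1 <= \prod_(i < n) F i.
Proof. by move=> F1; apply: (big_ind (fun y => 1 <= y)) => // u v; exact: mulr_ege1. Qed.

Lemma test_fun_ge1 n N r (x z : n.-tuple R) : 0 < r ->
  (forall i, comb N (r / 4) (3 * r / 4) (tnth x i) != 0) ->
  (forall i, `|tnth z i - tnth x i| <= r / 4) -> 1 <= test_fun n N r z.
Proof.
move=> r0 xmid zx; apply: prodr_ge1 => i; have [j /andP[xj1 xj2]] := comb_neq0 (xmid i).
apply: le_trans (chi_le_comb _ _ _ _ j); rewrite chiE addr0.
have /andP[? ?] : - (r / 4) <= tnth z i - tnth x i <= r / 4 by rewrite -ler_norml.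
by rewrite (_ : _ && _ = true) //; apply/andP; split; lra.
Qed.

End morrey_test_fun.

Section euclidean_norm.
Context {R : realType}.

Lemma enorm_le n (y : n.-tuple R) (rho : R) : 0 <= rho ->
  (forall i, `|tnth y i| <= rho) -> enorm y <= Num.sqrt n%:R * rho.
Proof.
move=> rho0 yrho; rewrite /enorm -(ger0_norm rho0) -sqrtr_sqr -sqrtrM ?ler0n //.
rewrite ler_sqrt ?mulr_ge0 ?ler0n ?sqr_ge0 //.
rewrite (_ : _ * _ = \sum_(i < n) rho ^+ 2); last by rewrite sumr_const card_ord mulr_natl.
by apply: ler_sum => i _; rewrite -real_normK ?num_real // lerXn2r ?nnegrE.
Qed.

Lemma enorm_gt0 n (y : n.-tuple R) (i : 'I_n) : tnth y i != 0 -> 0 < enorm y.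
Proof.
move=> yi; rewrite /enorm sqrtr_gt0 (bigD1 i) //=; apply: ltr_pwDl.
  by rewrite lt_def sqrf_eq0 yi sqr_ge0.
by apply: sumr_ge0 => j _; exact: sqr_ge0.
Qed.

End euclidean_norm.

(* The kernel [|y|^{alpha - n}] bounded below on the box [[r/8, r/4)^n], times the
   volume of that box. *)
Definition B_lower {R : realType} n (alpha r : R) : R :=
  ((Num.sqrt n%:R * (r / 4)) `^ (n%:R - alpha))^-1 * (r / 8) ^+ n.

Section bilinear_lower_bound.
Context {R : realType}.
Notation lam := (@lebesgue_measure R).
Implicit Types (alpha r : R) (N n : nat).

Lemma B_alpha_integrand_ge {n N alpha r} {x y : n.-tuple R} : (0 < n)%N ->
  alpha < n%:R -> 0 < r -> (forall i, comb N (r / 4) (3 * r / 4) (tnth x i) != 0) ->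
  (forall i, r / 8 <= tnth y i < r / 4) ->
  ((Num.sqrt n%:R * (r / 4)) `^ (n%:R - alpha))^-1 <=
  test_fun n N r (tsub x y) * test_fun n N r (tadd x y) / enorm y `^ (n%:R - alpha).
Proof.
move=> n0 an r0 xmid ybox.
set rho := Num.sqrt n%:R * (r / 4).
have rho0 : 0 < rho by rewrite mulr_gt0 ?sqrtr_gt0 ?ltr0n ?divr_gt0.
have yr i : `|tnth y i| <= r / 4 by have /andP[? ?] := ybox i; rewrite ger0_norm; lra.
have f1 : 1 <= test_fun n N r (tsub x y) * test_fun n N r (tadd x y).
  rewrite -[1]mulr1; apply: ler_pM; rewrite ?ler01 //; apply: test_fun_ge1 => // i;
    by rewrite tnth_mktuple addrAC subrr add0r ?normrN.
have y0 : 0 < enorm y.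
  apply: (@enorm_gt0 _ _ _ (Ordinal n0)); have /andP[? _] := ybox (Ordinal n0).
  by rewrite gt_eqF //; lra.
rewrite -[X in X <= _]mul1r ler_pM ?invr_ge0 ?powR_ge0 //.
rewrite lef_pV2 ?posrE ?powR_gt0 //; apply: ge0_ler_powR.
- by rewrite subr_ge0 ltW.
- by rewrite nnegrE ltW.
- by rewrite nnegrE ltW.
- by apply: enorm_le yr; rewrite divr_ge0 ?ltW.
Qed.

Lemma B_alpha_test_fun_ge {n N alpha r} {x : n.-tuple R} : (0 < n)%N -> alpha < n%:R ->
  0 < r -> (forall i, comb N (r / 4) (3 * r / 4) (tnth x i) != 0) ->
  ((B_lower n alpha r)%:E <= B_alpha alpha (test_fun n N r) (test_fun n N r) x)%E.
Proof.
move=> n0 an r0 xmid.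
set c := ((Num.sqrt n%:R * (r / 4)) `^ (n%:R - alpha))^-1.
have c0 : 0 <= c by rewrite invr_ge0 powR_ge0.
have -> : (B_lower n alpha r)%:E = int_Rn (fun y : n.-tuple R =>
    (c * \prod_(i < n) chi (r / 8) (r / 4) (tnth y i))%:E).
  have int_chi (i : 'I_n) : (\int[lam]_y (chi (r / 8) (r / 4) y)%:E = (r / 8)%:E)%E.
    by rewrite integral_chi; [congr (_%:E); lra | lra].
  rewrite (int_Rn_prod _ _ (fun=> chi (r / 8) (r / 4)) (fun=> r / 8) c0
    (fun _ => chi_ge0 _ _) (fun _ => measurable_chi _ _) int_chi).
  by rewrite prodr_const card_ord.
rewrite /B_alpha; apply: le_int_Rn => y.
  by rewrite lee_fin mulr_ge0 ?prodr_ge0 // => i _; exact: chi_ge0.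
rewrite lee_fin.
have [->|Py] := eqVneq (\prod_(i < n) chi (r / 8) (r / 4) (tnth y i)) 0.
  by rewrite mulr0 divr_ge0 ?powR_ge0 ?mulr_ge0 ?test_fun_ge0.
have ybox i : r / 8 <= tnth y i < r / 4.
  by apply: contraNT Py => yi; rewrite (bigD1 i) //= chiE (negbTE yi) mul0r.
rewrite big1 ?mulr1 => [|i _]; last by rewrite chiE ybox.
exact: B_alpha_integrand_ge.
Qed.

Lemma B_lower_gt0 n (alpha r : R) : (0 < n)%N -> 0 < r -> 0 < B_lower n alpha r.
Proof.
move=> n0 r0; rewrite mulr_gt0 ?invr_gt0 ?powR_gt0 ?exprn_gt0 ?divr_gt0 //.
by rewrite mulr_gt0 ?sqrtr_gt0 ?ltr0n ?divr_gt0.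
Qed.

Lemma comb_middle_in_unit_cube {n N r} {x : n.-tuple R} : 0 < r -> r * N%:R <= 1 ->
  (forall i, comb N (r / 4) (3 * r / 4) (tnth x i) != 0) ->
  dyadic_cube 0 (fun=> 0) x.
Proof.
move=> r0 rN xmid i; rewrite expr0z !mul1r add0r.
have [j /andP[xj1 xj2]] := comb_neq0 (xmid i).
have Np : 0 < N%:R :> R by rewrite ltr0n (leq_ltn_trans _ (ltn_ord j)).
have j0 : 0 <= j%:R / N%:R :> R by rewrite divr_ge0.
have jN : j%:R + 1 <= N%:R :> R by rewrite natr1 ler_nat.
split; first lra.
rewrite -(ltr_pM2r Np) mul1r; apply: lt_le_trans (_ : (j%:R / N%:R + 3 * r / 4) * N%:R <= _).
  by rewrite ltr_pM2r.
by rewrite mulrDl divfK ?gt_eqF //; lra.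
Qed.

Lemma unit_cube_B_alpha_test_fun_ge {n N alpha r} t (x : n.-tuple R) : (0 < N)%N ->
  0 < r -> r * N%:R <= 1 -> (0 < n)%N -> alpha < n%:R -> 0 < t ->
  ((B_lower n alpha r `^ t * \prod_(i < n) comb N (r / 4) (3 * r / 4) (tnth x i))%:E <=
   (\1_(dyadic_cube 0 (fun=> 0)) x)%:E *
   `|B_alpha alpha (test_fun n N r) (test_fun n N r) x| `^ t)%E.
Proof.
move=> N0 r0 rN n0 an t0.
have [->|Px] := eqVneq (\prod_(i < n) comb N (r / 4) (3 * r / 4) (tnth x i)) 0.
  by rewrite mulr0 mule_ge0 ?lee_fin ?indic_ge0 // poweR_ge0.
have xmid i : comb N (r / 4) (3 * r / 4) (tnth x i) != 0.
  by apply: contraNneq Px => xi; rewrite (bigD1 i) //= xi mul0r.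
have Bx := B_alpha_test_fun_ge n0 an r0 xmid.
have B0 : 0 < B_lower n alpha r by exact: B_lower_gt0.
rewrite indicE mem_set; last exact: comb_middle_in_unit_cube r0 rN xmid.
rewrite mul1e.
rewrite gee0_abs; last by apply: le_trans Bx; rewrite lee_fin ltW.
apply: (@le_trans _ _ ((B_lower n alpha r `^ t)%:E)).
  rewrite lee_fin ler_piMr ?powR_ge0 //; apply: prodr_ile1 => i _.
  have Np : 0 < N%:R :> R by rewrite ltr0n.
  by rewrite comb_ge0 comb_le1 // -(ler_pM2r Np) mulVf ?gt_eqF //; lra.
rewrite -poweR_EFin; apply: gt0_ler_poweR => //; first exact: ltW.
- by rewrite in_itv /= leey andbT lee_fin ltW.
- by rewrite in_itv /= leey andbT; apply: le_trans Bx; rewrite lee_fin ltW.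
Qed.

Lemma morrey_norm_B_alpha_test_fun_ge {n N alpha r} s {t} : (0 < N)%N -> 0 < r ->
  r * N%:R <= 1 -> (0 < n)%N -> alpha < n%:R -> 0 < t ->
  ((((B_lower n alpha r) `^ t * (N%:R * (r / 2)) ^+ n) `^ t^-1)%:E <=
     morrey_norm s t (B_alpha alpha (test_fun n N r) (test_fun n N r)))%E.
Proof.
move=> N0 r0 rN n0 an t0; have Np : 0 < N%:R :> R by rewrite ltr0n.
apply: le_ereal_sup_tmp; eexists; first by exists 0, (fun=> 0).
rewrite /dyadic_vol expr0z expr1n powR1 invr1 !mul1e -poweR_EFin.
apply: gt0_ler_poweR; first by rewrite invr_ge0 ltW.
- by rewrite in_itv /= leey lee_fin mulr_ge0 ?powR_ge0 // exprn_ge0 // mulr_ge0 ?divr_ge0 ?ltW.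
- rewrite in_itv /= leey andbT; apply: int_Rn_ge0 => x.
  by rewrite mule_ge0 ?lee_fin ?indic_ge0 // poweR_ge0.
have int_middle (i : 'I_n) :
    (\int[lam]_x (comb N (r / 4) (3 * r / 4) x)%:E = (N%:R * (r / 2))%:E)%E.
  by rewrite integral_comb; [congr ((_ * _)%:E); lra | lra].
rewrite (_ : _ ^+ n = \prod_(i < n) (N%:R * (r / 2))); last by rewrite prodr_const card_ord.
rewrite -(int_Rn_prod _ _ (fun=> comb N (r / 4) (3 * r / 4)) _ (powR_ge0 _ _)
  (fun _ => comb_ge0 _ _ _) (fun _ => measurable_comb _ _ _) int_middle).
apply: le_int_Rn => x; last exact: unit_cube_B_alpha_test_fun_ge.
by rewrite lee_fin mulr_ge0 ?powR_ge0 ?prodr_ge0 // => i _; exact: comb_ge0.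
Qed.

End bilinear_lower_bound.

Definition morrey_bilinear_bound {R : realType} n (alpha s t p1 q1 p2 q2 C : R) : Prop :=
  forall f g : n.-tuple R -> R,
    measurable_fun [set: n.-tuple R] f -> measurable_fun [set: n.-tuple R] g ->
    (forall x, 0 <= f x) -> (forall x, 0 <= g x) ->
    (morrey_norm p1 q1 (fun x => (f x)%:E) * morrey_norm p2 q2 (fun x => (g x)%:E) < +oo)%E ->
    (morrey_norm s t (B_alpha alpha f g) <=
     C%:E * morrey_norm p1 q1 (fun x => (f x)%:E) * morrey_norm p2 q2 (fun x => (g x)%:E))%E.

Definition tooth_width {R : realType} (N : nat) (th : R) : R :=
  expR (- (ln N%:R / (1 - th))).

Section counterexample.
Context {R : realType}.
Implicit Types (th : R) (n N : nat).

Lemma morrey_bilinear_bound_test_fun {n N} {alpha s t p1 q1 p2 q2 C r : R} :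
  morrey_bilinear_bound n alpha s t p1 q1 p2 q2 C -> 0 < C ->
  (0 < n)%N -> alpha < n%:R -> 0 < t -> 0 < q1 -> q1 <= p1 -> 0 < q2 -> q2 <= p2 ->
  (0 < N)%N -> 0 < r -> r * N%:R <= 1 ->
  r * N%:R <= r `^ (q1 / p1) -> r * N%:R <= r `^ (q2 / p2) ->
  (B_lower n alpha r `^ t * (N%:R * (r / 2)) ^+ n) `^ t^-1 <=
  C * (3 `^ q1^-1 * r `^ p1^-1) ^+ n * (3 `^ q2^-1 * r `^ p2^-1) ^+ n.
Proof.
move=> HC C0 n0 an t0 q10 qp1 q20 qp2 N0 r0 rN rNq1 rNq2.
have f1 := morrey_norm_test_fun_le n N0 r0 rN q10 qp1 rNq1.
have f2 := morrey_norm_test_fun_le n N0 r0 rN q20 qp2 rNq2.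
have f1_ge0 := morrey_norm_ge0 p1 q1 (fun x => (test_fun n N r x)%:E).
have f2_ge0 := morrey_norm_ge0 p2 q2 (fun x => (test_fun n N r x)%:E).
have fin : (morrey_norm p1 q1 (fun x => (test_fun n N r x)%:E) *
            morrey_norm p2 q2 (fun x => (test_fun n N r x)%:E) < +oo)%E.
  by apply: le_lt_trans (lee_pmul f1_ge0 f2_ge0 f1 f2) _; rewrite -EFinM ltry.
have upper : (C%:E * morrey_norm p1 q1 (fun x => (test_fun n N r x)%:E) *
    morrey_norm p2 q2 (fun x => (test_fun n N r x)%:E) <=
    (C * (3 `^ q1^-1 * r `^ p1^-1) ^+ n * (3 `^ q2^-1 * r `^ p2^-1) ^+ n)%:E)%E.
  rewrite !EFinM; apply: lee_pmul _ f2_ge0 _ f2; first by rewrite mule_ge0 // lee_fin ltW.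
  by apply: lee_pmul _ f1_ge0 (lexx _) f1; rewrite lee_fin ltW.
rewrite -lee_fin; apply: (le_trans _ upper); apply: (le_trans _ (HC _ _ _ _ _ _ fin)).
- exact: morrey_norm_B_alpha_test_fun_ge.
- exact: measurable_test_fun.
- exact: measurable_test_fun.
- exact: test_fun_ge0.
- exact: test_fun_ge0.
Qed.

Lemma exists_nat_ln_gt (K : R) {A : R} : 0 < A -> exists2 N : nat, (0 < N)%N & K < A * ln N%:R.
Proof.
move=> A0; exists (Num.truncn (expR (A^-1 * K))).+1 => //.
rewrite -ltr_pdivrMl // -[X in X < _]expRK ltr_ln ?posrE ?expR_gt0 ?ltr0n //.
exact: truncnS_gt.
Qed.

Lemma tooth_width_gt0 N th : 0 < tooth_width N th.
Proof. exact: expR_gt0. Qed.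

Lemma tooth_width_le1 N th : (0 < N)%N -> th < 1 -> tooth_width N th <= 1.
Proof.
by move=> N0 th1; rewrite expR_le1 oppr_le0 divr_ge0 ?ln_ge0 ?ler1n ?subr_ge0 ?ltW.
Qed.

Lemma tooth_width_mulN N th : (0 < N)%N -> th != 1 ->
  tooth_width N th * N%:R = tooth_width N th `^ th.
Proof.
move=> N0 th1; have r0 := tooth_width_gt0 N th.
apply: ln_inj; rewrite ?posrE ?mulr_gt0 ?powR_gt0 ?ltr0n //.
rewrite lnM ?posrE ?ltr0n // ln_powR /tooth_width expRK.
by field; rewrite subr_eq0 eq_sym.
Qed.

Lemma ln_morrey_test_bound n (Q P r : R) : 0 < r ->
  ln ((3 `^ Q * r `^ P) ^+ n) = n%:R * (Q * ln 3 + P * ln r).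
Proof.
move=> r0; rewrite lnXn ?mulr_gt0 ?powR_gt0 // lnM ?posrE ?powR_gt0 //.
by rewrite !ln_powR mulr_natl.
Qed.

Lemma ln_B_lower n (alpha r : R) : (0 < n)%N -> 0 < r ->
  ln (B_lower n alpha r) =
  (alpha - n%:R) * (ln (Num.sqrt n%:R) - ln 4) - n%:R * ln 8 + alpha * ln r.
Proof.
move=> n0 r0; have sn : 0 < Num.sqrt n%:R :> R by rewrite sqrtr_gt0 ltr0n.
have r8 : 0 < r / 8 by rewrite divr_gt0.
rewrite /B_lower lnM ?posrE ?invr_gt0 ?powR_gt0 ?mulr_gt0 ?divr_gt0 ?exprn_gt0 //.
rewrite lnV ?posrE ?powR_gt0 ?mulr_gt0 ?divr_gt0 // ln_powR lnM ?posrE ?divr_gt0 //.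
by rewrite lnXn ?divr_gt0 // !ln_div ?posrE //; ring.
Qed.

Lemma ln_morrey_B_bound n N (alpha r t : R) : (0 < n)%N -> (0 < N)%N -> 0 < r ->
  ln ((B_lower n alpha r `^ t * (N%:R * (r / 2)) ^+ n) `^ t^-1) =
  t^-1 * (t * ln (B_lower n alpha r) + n%:R * (ln N%:R + ln r - ln 2)).
Proof.
move=> n0 N0 r0; have B0 : 0 < B_lower n alpha r by exact: B_lower_gt0.
have Nr : 0 < N%:R * (r / 2) by rewrite mulr_gt0 ?divr_gt0 ?ltr0n.
rewrite ln_powR lnM ?posrE ?powR_gt0 ?exprn_gt0 // ln_powR lnXn //.
by rewrite lnM ?posrE ?ltr0n ?divr_gt0 // ln_div ?posrE //; ring.
Qed.

Lemma ln_test_gap n (alpha t P1 Q1 P2 Q2 C th : R) : (0 < n)%N -> 0 < C ->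
  t != 0 -> th != 1 -> exists K, forall N, (0 < N)%N ->
  let r := tooth_width N th in
  ln ((B_lower n alpha r `^ t * (N%:R * (r / 2)) ^+ n) `^ t^-1) -
  ln (C * (3 `^ Q1 * r `^ P1) ^+ n * (3 `^ Q2 * r `^ P2) ^+ n) =
  n%:R / (1 - th) * (P1 + P2 - alpha / n%:R - th / t) * ln N%:R + K.
Proof.
move=> n0 C0 t0 th1; exists ((alpha - n%:R) * (ln (Num.sqrt n%:R) - ln 4) - n%:R * ln 8
  - n%:R / t * ln 2 - ln C - n%:R * (Q1 + Q2) * ln 3) => N N0 r.
have r0 := tooth_width_gt0 N th.
have U Q P : 0 < (3 `^ Q * r `^ P) ^+ n by rewrite exprn_gt0 ?mulr_gt0 ?powR_gt0.
rewrite ln_morrey_B_bound // ln_B_lower // !lnM ?posrE ?mulr_gt0 //.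
rewrite !ln_morrey_test_bound // /r /tooth_width expRK.
by field; rewrite t0 pnatr_eq0 -lt0n n0 subr_eq0 eq_sym th1.
Qed.

End counterexample.

Theorem theorem3p1 (R : realType) (n : nat) (alpha s t p1 q1 p2 q2 : R) :
  0 < alpha -> alpha < n%:R ->
  0 < t -> t <= s ->
  0 < q1 -> q1 <= p1 ->
  0 < q2 -> q2 <= p2 ->
  s^-1 = p1^-1 + p2^-1 - alpha / n%:R ->
  t / s > Num.max (q1 / p1) (q2 / p2) ->
  ~ (exists C : R, 0 < C /\
       forall f g : n.-tuple R -> R,
         measurable_fun [set: n.-tuple R] f ->
         measurable_fun [set: n.-tuple R] g ->
         (forall x, 0 <= f x) -> (forall x, 0 <= g x) ->
         (morrey_norm p1 q1 (fun x => (f x)%:E) *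
          morrey_norm p2 q2 (fun x => (g x)%:E) < +oo)%E ->
         (morrey_norm s t (B_alpha alpha f g) <=
          C%:E * morrey_norm p1 q1 (fun x => (f x)%:E) *
                 morrey_norm p2 q2 (fun x => (g x)%:E))%E).
Proof.
move=> a0 an t0 ts q10 qp1 q20 qp2 hs hts [C [C0 HC]].
have n0 : (0 < n)%N by rewrite -(ltr0n R) (lt_trans a0).
have s0 : 0 < s by apply: lt_le_trans ts.
set th := Num.max (q1 / p1) (q2 / p2) in hts.
have th1 : th < 1 by apply: lt_le_trans hts _; rewrite ler_pdivrMr // mul1r.
have th0 : 0 <= th by rewrite le_max divr_ge0 // ltW // (lt_le_trans q10 qp1).
have A0 : 0 < n%:R / (1 - th) * (s^-1 - th / t).
  by rewrite !mulr_gt0 ?invr_gt0 ?subr_gt0 ?ltr0n // ltr_pdivrMr // mulrC.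
have [K gap] := ln_test_gap n alpha t p1^-1 q1^-1 p2^-1 q2^-1 C th n0 C0
  (lt0r_neq0 t0) (negbT (lt_eqF th1)).
have [N N0 HN] := exists_nat_ln_gt (- K) A0.
have := gap N N0; set r := tooth_width N th => {}gap.
have [r0 r1] : 0 < r /\ r <= 1 by rewrite tooth_width_gt0 tooth_width_le1.
have rN q p : q / p <= th -> r * N%:R <= r `^ (q / p).
  by move=> qp; rewrite tooth_width_mulN ?(lt_eqF th1) // ger_powR ?r0.
have rN1 : r * N%:R <= 1.
  by rewrite tooth_width_mulN ?(lt_eqF th1) // -(powRr0 r) ger_powR ?r0.
have [qth1 qth2] : q1 / p1 <= th /\ q2 / p2 <= th by rewrite !le_max !lexx orbT.
have := morrey_bilinear_bound_test_fun HC C0 n0 an t0 q10 qp1 q20 qp2 N0 r0 rN1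
  (rN q1 p1 qth1) (rN q2 p2 qth2).
rewrite -ler_ln ?posrE; first by move: gap => /=; rewrite -hs; lra.
- have B0 : 0 < B_lower n alpha r by exact: B_lower_gt0.
  by rewrite powR_gt0 // mulr_gt0 ?powR_gt0 // exprn_gt0 // mulr_gt0 ?ltr0n ?divr_gt0.
- by rewrite !mulr_gt0 // exprn_gt0 // mulr_gt0 ?powR_gt0.
Qed.
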